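(* Let $(X,T)$ be a minimal topological dynamical system with $X$ compact metrisable and $T$ abelian, with maximal equicontinuous factor map $\pi:X\to X_{max}$, and let $e$ be a minimal idempotent of its Ellis semigroup $E$. Let $s:X_{max}\to{\mathcal H}_e$ be a map with $ev_0\circ\pi_*\circ s={\mathrm{id}}$ and $s\circ\delta^t=\alpha^t\circ s$ for all $t\in T$. Let $f\in K_e$ with $f\neq e$ and let $a\in X_{max}$. Then $\mathrm{supp}(s(a)fs(a)^{-1})=\mathrm{supp}(f)+a$, where $s(a)^{-1}$ is the inverse in ${\mathcal H}_e$.
   Context: $T$ acts on $X$ by homeomorphisms $\alpha^t$. $E$ is the closure of $\{\alpha^t\}$ in $X^X$ (pointwise convergence, composition as product); minimal idempotents are idempotents of its smallest two-sided ideal. ${\mathcal H}_e=eEe$ is the structure group, a group with identity $e$. Since $(X,T)$ is minimal and $T$ abelian, $X_{max}$ is a compact abelian group (written additively, neutral element $0$) on which $T$ acts by translations $\delta^t$; its Ellis semigroup $E(X_{max})$ is a group and evaluation at $0$, $ev_0:E(X_{max})\to X_{max}$, is an isomorphism. $\pi_*:E(X)\to E(X_{max})$ is the induced epimorphism $\pi_*(g)(\pi(x))=\pi(g(x))$. $K_e$ is the subgroup of ${\mathcal H}_e$ of elements $g$ preserving the fibres of $\pi$ (i.e. $\pi(g(x))=\pi(x)$ for all $x$). For $g\in{\mathcal H}_e$, $g$ acts trivially at $\xi\in X_{max}$ if all points of $e(\pi^{-1}(\xi))$ are fixed by $g$, and $\mathrm{supp}(g)$ is the set of points at which $g$ does not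 act trivially. *)

From HB Require Import structures.
From Stdlib Require Import ClassicalEpsilon.
From mathcomp Require Import all_boot all_order all_algebra.
From mathcomp Require Import all_classical all_reals all_analysis.
Set Implicit Arguments. Unset Strict Implicit. Unset Printing Implicit Defensive.
Import Order.TTheory GRing.Theory Num.Theory.
Local Open Scope classical_set_scope.
Local Open Scope ring_scope.

Definition is_action (T : zmodType) (X : topologicalType) (a : T -> X -> X) :=
  [/\ a 0 = id, (forall s t, a (s + t) = a s \o a t) & (forall t, continuous (a t))].

Definition minimal_system (T : zmodType) (X : topologicalType) (a : T -> X -> X) :=
  forall x : X, closure (range (fun t => a t x)) = [set: X].

Definition factor_map (T : zmodType) (X Y : topologicalType)
  (a : T -> X -> X) (b : T -> Y -> Y) (p : X -> Y) :=
  [/\ continuous p, (forall y, exists x, p x = y) & (forall t x, p (a t x) = b t (p x))].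

(** The maximal equicontinuous factor, with X_max a compact (Hausdorff) abelian
    topological group on which T acts by the translations d t xi = xi + c t. *)
Definition is_max_equicontinuous_factor (T : zmodType) (X : topologicalType)
  (a : T -> X -> X) (Xm : topologicalZmodType) (c : T -> Xm) (pi : X -> Xm) :=
  [/\ hausdorff_space Xm, compact [set: Xm],
      (forall s t, c (s + t) = c s + c t),
      factor_map a (fun t xi => xi + c t) pi &
      (forall (Y : puniformType) (b : T -> Y -> Y) (p : X -> Y),
          hausdorff_space Y -> compact [set: Y] -> is_action b ->
          equicontinuous [set: T] b -> factor_map a b p ->
          exists q : Xm -> Y, continuous q /\ (forall x, q (pi x) = p x))].

Definition ellis (T : Type) (X : topologicalType) (a : T -> X -> X) : set (X -> X) :=
  @closure {ptws X -> X} (range a).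

Definition two_sided_ideal (X : Type) (E I : set (X -> X)) :=
  [/\ I !=set0, I `<=` E &
      forall g h, E g -> I h -> I (g \o h) /\ I (h \o g)].

Definition smallest_ideal (X : Type) (E I : set (X -> X)) :=
  two_sided_ideal E I /\ forall J, two_sided_ideal E J -> I `<=` J.

Definition minimal_idempotent (X : Type) (E : set (X -> X)) (e : X -> X) :=
  (exists I, smallest_ideal E I /\ I e) /\ e \o e = e.

Definition structure_group (X : Type) (E : set (X -> X)) (e : X -> X) : set (X -> X) :=
  [set e \o g \o e | g in E].

Definition Hinv (X : Type) (E : set (X -> X)) (e g : X -> X) : X -> X :=
  epsilon (inhabits id)
    (fun h => structure_group E e h /\ h \o g = e /\ g \o h = e).

Definition pi_star (X Xm : Type) (pi : X -> Xm) (g : X -> X) : Xm -> Xm :=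
  epsilon (inhabits id) (fun h => forall x, h (pi x) = pi (g x)).

Definition ev0 (Xm : zmodType) (h : Xm -> Xm) : Xm := h 0.

Definition K_e (X Xm : Type) (E : set (X -> X)) (e : X -> X) (pi : X -> Xm) :
  set (X -> X) :=
  [set g | structure_group E e g /\ forall x, pi (g x) = pi x].

Definition supp (X Xm : Type) (e : X -> X) (pi : X -> Xm) (g : X -> X) : set Xm :=
  [set xi | exists x, pi x = xi /\ g (e x) <> e x].

From HB Require Import structures.
From Stdlib Require Import ClassicalEpsilon.
From mathcomp Require Import all_boot all_order all_algebra.
From mathcomp Require Import all_classical all_reals all_analysis.
Import Order.TTheory GRing.Theory Num.Theory.
Local Open Scope classical_set_scope.
Local Open Scope ring_scope.

Set Implicit Arguments. Unset Strict Implicit. Unset Printing Implicit Defensive.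

(* Every element k of the Ellis semigroup is a pointwise limit of maps alpha t,
   which act on X_max by translations, so k translates X_max as well:
   pi (k x) - pi x does not depend on x.  For s(a) the normalisation
   ev_0 (pi_* s(a)) = a says that this translation is by a, and the inverse of
   s(a) in H_e (which exists since e lies in a minimal left ideal of E, found by
   Zorn's lemma and the compactness of E) translates by -a.  Conjugation by s(a)
   therefore carries the fibre of e over xi to the fibre over xi + a, and a
   point there is fixed by s(a) f s(a)^-1 iff its preimage is fixed by f. *)

Lemma ptws_continuous (Y : topologicalType) (I : Type) (Z : topologicalType)
  (F : Y -> {ptws I -> Z}) : (forall i, continuous (F^~ i)) -> continuous F.
Proof.
move=> cF y; apply/cvg_sup => i.
move: y; apply/(@continuousP _ (initial_topology (fun f : I -> Z => f i))).
by move=> _ [B oB <-]; exact: open_comp (fun y _ => cF i y) oB.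
Qed.

Lemma ptws_compact (I : eqType) (Z : topologicalType) :
  compact [set: Z] -> compact [set: {ptws I -> Z}].
Proof.
move=> cZ; have := @tychonoff _ (fun _ : I => Z) (fun _ => setT) (fun=> cZ).
by congr compact; rewrite predeqE.
Qed.

Lemma continuous_compr_ptws (I : eqType) (J : Type) (Z : topologicalType)
  (q : J -> I) : continuous (fun u : {ptws I -> Z} => (u \o q : {ptws J -> Z})).
Proof. by apply: ptws_continuous => j; exact: proj_continuous. Qed.

Lemma continuous_compl_ptws (I : eqType) (Z W : topologicalType) (a : Z -> W) :
  continuous a -> continuous (fun u : {ptws I -> Z} => (a \o u : {ptws I -> W})).
Proof.
move=> ca; apply: ptws_continuous => i u.
exact: (continuous_comp (@proj_continuous I (fun=> Z) i u) (ca _)).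
Qed.

Lemma Zorn_bigcap (T : Type) (P : set (set T)) :
  P !=set0 ->
  (forall F, F `<=` P -> F !=set0 -> total_on F subset ->
     P (\bigcap_(A in F) A)) ->
  exists2 A, P A & forall B, P B -> B `<=` A -> A `<=` B.
Proof.
move=> [A0 PA0] Pcap.
pose R (A B : {A | P A}) := `[< sval B `<=` sval A >].
have [[A PA] Amin] : exists A, premaximal R A.
  apply: (ZL_preorder (exist _ A0 PA0)).
  - by move=> A; exact/asboolP.
  - by move=> A B C /asboolP AB /asboolP BC; apply/asboolP; exact: subset_trans AB.
  move=> F Ftot.
  have [[B0 FB0]|F0] := pselect (exists B, F B); last first.
    by exists (exist _ A0 PA0) => B FB; exfalso; apply: F0; exists B.
  pose G := [set sval B | B in F].
  have PG : P (\bigcap_(A in G) A).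
    apply: Pcap; first by move=> _ [B _ <-]; exact: svalP.
      by exists (sval B0), B0.
    move=> _ _ [B FB <-] [C FC <-].
    by have [/asboolP|/asboolP] := Ftot B C FB FC; [right|left].
  by exists (exist _ _ PG) => B FB; apply/asboolP => x Gx; apply: Gx; exists B.
by exists A => // B PB BA; exact/asboolP/(Amin (exist _ B PB))/asboolP.
Qed.

Lemma compact_chain_bigcap_neq0 (Y : topologicalType) (K : set Y)
  (F : set (set Y)) :
  compact K -> F !=set0 -> total_on F subset ->
  (forall A, F A -> [/\ closed A, A !=set0 & A `<=` K]) ->
  \bigcap_(A in F) A !=set0.
Proof.
move=> cK [A0 FA0] Ftot FP.
pose G := filter_from F id.
have PG : ProperFilter G.
  apply: filter_from_proper; last by move=> A /FP[].
  apply: filter_from_filter; first by exists A0.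
  move=> A B FA FB; have [AB|BA] := Ftot A B FA FB.
  - by exists A => // x Ax; split => //; exact: AB.
  - by exists B => // x Bx; split => //; exact: BA.
have [|p [_ clp]] := cK G PG; first by exists A0 => //; have [] := FP A0 FA0.
exists p => A FA; have [cA _ _] := FP A FA; apply: cA => B nB.
by apply: clp nB; exists A.
Qed.

Section Ellis.
Variables (T : Type) (X : topologicalType) (alpha : T -> X -> X).
Local Notation E := (ellis alpha).

Lemma ellis_closed : closed (E : set {ptws X -> X}).
Proof. exact: closed_closure. Qed.

Lemma ellis_act t : E (alpha t).
Proof. by apply: subset_closure; exists t. Qed.

Lemma ellis_sub_closed (C : set {ptws X -> X}) :
  closed C -> (forall t, C (alpha t)) -> E `<=` C.
Proof.
move=> cC Calpha; rewrite /ellis closureE; apply: smallest_sub => //.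
by move=> _ [t _ <-].
Qed.

Lemma ellis_compact : compact [set: X] -> compact (E : set {ptws X -> X}).
Proof.
by move=> cX; exact: subclosed_compact ellis_closed (ptws_compact cX) (subsetT _).
Qed.

End Ellis.

Section EllisMonoid.
Variables (T : zmodType) (X : topologicalType) (alpha : T -> X -> X).
Hypothesis act : is_action alpha.
Local Notation E := (ellis alpha).

Lemma ellis_id : E id.
Proof. by case: act => a0 _ _; rewrite -a0; exact: ellis_act. Qed.

Lemma ellis_comp u v : E u -> E v -> E (u \o v).
Proof.
case: act => _ aD ac Eu Ev.
have Ealpha t w : E w -> E (alpha t \o w).
  move=> Ew.
  suff : E `<=` (fun w : {ptws X -> X} => (alpha t \o w : {ptws X -> X})) @^-1` E.
    by apply.
  apply: ellis_sub_closed => [|s]; last by rewrite /preimage /= -aD; exact: ellis_act.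
  apply: preimage_closed; last exact: ellis_closed.
  by move=> ? _; exact: continuous_compl_ptws.
suff : E `<=` (fun w : {ptws X -> X} => (w \o v : {ptws X -> X})) @^-1` E by apply.
apply: ellis_sub_closed => [|t]; last exact: Ealpha.
apply: preimage_closed; last exact: ellis_closed.
by move=> ? _; exact: continuous_compr_ptws.
Qed.

End EllisMonoid.

Section LeftIdeals.
Variables (X : Type) (E : set (X -> X)).
Hypotheses (compE : forall u v, E u -> E v -> E (u \o v)) (idE : E id).

Definition left_ideal (L : set (X -> X)) :=
  [/\ L !=set0, L `<=` E & forall u l, E u -> L l -> L (u \o l)].

Definition minimal_left_ideal (L : set (X -> X)) :=
  left_ideal L /\ forall L', left_ideal L' -> L' `<=` L -> L `<=` L'.

Lemma left_ideal_self : left_ideal E.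
Proof. by split => //; exists id. Qed.

Lemma left_ideal_principal l : E l -> left_ideal [set u \o l | u in E].
Proof.
move=> El; split; first by exists l, id.
  by move=> _ [u Eu <-]; exact: compE.
by move=> u _ Eu [v Ev <-]; exists (u \o v) => //; exact: compE.
Qed.

Lemma minimal_left_idealE L l :
  minimal_left_ideal L -> L l -> L = [set u \o l | u in E].
Proof.
move=> [[_ LE Lmul] Lmin] Ll.
have EL : [set u \o l | u in E] `<=` L by move=> _ [u Eu <-]; exact: Lmul.
by apply/seteqP; split => //; apply: Lmin EL; exact/left_ideal_principal/LE.
Qed.

Lemma minimal_left_idealMr L p :
  minimal_left_ideal L -> E p -> minimal_left_ideal [set l \o p | l in L].
Proof.
move=> mL Ep; have [[[l0 Ll0] LE Lmul] _] := mL; split.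
  split; first by exists (l0 \o p), l0.
    by move=> _ [l Ll <-]; exact: compE (LE l Ll) Ep.
  by move=> u _ Eu [l Ll <-]; exists (u \o l) => //; exact: Lmul.
move=> L' [[q L'q] _ L'mul] L'sub _ [l Ll <-].
have [l' Ll' l'q] := L'sub q L'q; rewrite -l'q in L'q.
move: Ll; rewrite (minimal_left_idealE mL Ll') => -[u Eu <-].
exact: L'mul u _ Eu L'q.
Qed.

Lemma smallest_ideal_sub_minimal_left_ideals I :
  smallest_ideal E I -> (exists L, minimal_left_ideal L) ->
  I `<=` \bigcup_(L in minimal_left_ideal) L.
Proof.
move=> [_ Imin] [L0 mL0]; apply: Imin; split.
- by have [[[l Ll] _ _] _] := mL0; exists l, L0.
- by move=> g [L [[_ LE _] _] Lg]; exact: LE.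
move=> g h Eg [L mL Lh]; split.
  by exists L => //; have [[_ _ Lmul] _] := mL; exact: Lmul.
by exists [set l \o g | l in L]; [exact: minimal_left_idealMr | exists h].
Qed.

Lemma structure_group_neutral e g : (forall x, e (e x) = e x) ->
  structure_group E e g -> (forall x, e (g x) = g x) /\ (forall x, g (e x) = g x).
Proof. by move=> ee [m _ <-]; split => x /=; rewrite ee. Qed.

Lemma structure_group_sub e : E e -> structure_group E e `<=` E.
Proof. by move=> Ee _ [m Em <-]; exact: compE (compE Ee Em) Ee. Qed.

Lemma structure_group_inverse e g :
  (exists L, minimal_left_ideal L) -> minimal_idempotent E e ->
  structure_group E e g ->
  exists h, structure_group E e h /\ h \o g = e /\ g \o h = e.
Proof.
move=> ideal_exists [[I [sI Ie]] ee'] Hg.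
have ee x : e (e x) = e x := congr1 (@^~ x) ee'.
have [L minL Le] := smallest_ideal_sub_minimal_left_ideals sI ideal_exists Ie.
have [[_ LE Lmul] _] := minL.
have left_inv g' : structure_group E e g' ->
    exists2 h, structure_group E e h & h \o g' = e.
  case=> m Em <-.
  have Lg' : L (e \o m \o e) by exact: Lmul (compE (LE e Le) Em) Le.
  move: (Le); rewrite (minimal_left_idealE minL Lg') => -[k Ek ke].
  exists (e \o k \o e); first by exists k.
  apply/funext => x; move/(congr1 (@^~ x)): ke => /= ke.
  by rewrite ee ke ee.
have [h0 Hh0 h0g'] := left_inv g Hg.
have [h1 Hh1 h1h0] := left_inv h0 Hh0.
have h1g : h1 = g.
  have h0g x : h0 (g x) = e x := congr1 (@^~ x) h0g'.
  have [_ h1e] := structure_group_neutral ee Hh1.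
  have [eg _] := structure_group_neutral ee Hg.
  apply/funext => x; rewrite -h1e -h0g.
  by move/(congr1 (@^~ (g x))): h1h0 => /= ->; rewrite eg.
by exists h0; split => //; split => //; rewrite -h1g.
Qed.

Lemma Hinv_inverse e g :
  (exists L, minimal_left_ideal L) -> minimal_idempotent E e ->
  structure_group E e g ->
  [/\ structure_group E e (Hinv E e g), Hinv E e g \o g = e & g \o Hinv E e g = e].
Proof.
move=> ideal_exists mie Hg.
have /(epsilon_spec (inhabits id)) := structure_group_inverse ideal_exists mie Hg.
by rewrite -/(Hinv E e g) => -[? []].
Qed.

End LeftIdeals.

Section EllisMinimalLeftIdeal.
Variables (T : zmodType) (X : topologicalType) (alpha : T -> X -> X).
Hypotheses (act : is_action alpha) (hX : hausdorff_space X) (cX : compact [set: X]).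
Local Notation E := (ellis alpha).

Lemma ellis_principal_closed l :
  closed ([set u \o l | u in E] : set {ptws X -> X}).
Proof.
apply: compact_closed; first exact: hausdorff_product.
apply: continuous_compact (ellis_compact cX).
exact/continuous_subspaceT/continuous_compr_ptws.
Qed.

Lemma ellis_minimal_left_ideal : exists L, minimal_left_ideal E L.
Proof.
have compE := ellis_comp act; have idE := ellis_id act.
pose P := [set L | left_ideal E L /\ closed (L : set {ptws X -> X})].
have [L [iL _] Lmin] : exists2 L, P L & forall B, P B -> B `<=` L -> L `<=` B.
  apply: Zorn_bigcap.
    by exists E; split; [exact: left_ideal_self compE idE | exact: ellis_closed].
  move=> F FP F0 Ftot; split; last by apply: closed_bigI => A /FP[].
  have [A FA] := F0; have [[_ AE _] _] := FP A FA; split.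
  - apply: compact_chain_bigcap_neq0 (ellis_compact (alpha := alpha) cX) F0 Ftot _.
    by move=> B /FP[[? ? _] ?]; split.
  - by move=> u Fu; exact: AE (Fu A FA).
  - move=> u l Eu Fl B FB; have [[_ _ Bmul] _] := FP B FB.
    exact: Bmul _ _ Eu (Fl B FB).
(* A minimal closed left ideal is minimal among all left ideals, because
   E \o l is a closed left ideal inside every left ideal containing l. *)
exists L; split => // L' [[l L'l] L'E L'mul] L'L.
have PEl : P [set u \o l | u in E].
  split; last exact: ellis_principal_closed.
  exact: left_ideal_principal compE idE _ (L'E l L'l).
apply: subset_trans (Lmin _ PEl _) _ => [_ [u Eu <-]|_ [u Eu <-]]; last exact: L'mul.
exact/L'L/L'mul.
Qed.

End EllisMinimalLeftIdeal.

Section EllisFactor.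
Variables (T : Type) (X : topologicalType) (alpha : T -> X -> X).
Variables (Xm : topologicalZmodType) (c : T -> Xm) (pi : X -> Xm).
Hypotheses (hXm : hausdorff_space Xm) (cpi : continuous pi).
Hypothesis pi_alpha : forall t x, pi (alpha t x) = pi x + c t.

Lemma ellis_pi_sub k x y : ellis alpha k -> pi (k x) - pi (k y) = pi x - pi y.
Proof.
move=> Ek; pose d (k : {ptws X -> X}) := pi (k x) - pi (k y).
suff : ellis alpha `<=` d @^-1` [set pi x - pi y] by apply.
apply: ellis_sub_closed => [|t]; last first.
  by rewrite /preimage /d /= !pi_alpha opprD addrACA subrr addr0.
apply: preimage_closed; last exact/accessible_closed_set1/hausdorff_accessible.
move=> k' _.
apply: (@continuous_comp _ _ _ (fun k : {ptws X -> X} => (pi (k x), pi (k y)))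
  (fun z : Xm * Xm => z.1 - z.2)); last exact: sub_continuous.
have pi_ev z : {for k', continuous (fun k : {ptws X -> X} => pi (k z))}.
  by apply: continuous_comp; [exact: proj_continuous | exact: cpi].
exact: cvg_pair (pi_ev x) (pi_ev y).
Qed.

Lemma ellis_pi_shift k : ellis alpha k ->
  forall x y, pi (k x) = pi x + (pi (k y) - pi y).
Proof. by move=> Ek x y; rewrite addrCA -(ellis_pi_sub x y Ek) addrC subrK. Qed.

End EllisFactor.

Lemma ev0_pi_star_shift (X : Type) (Xm : zmodType) (pi : X -> Xm) (g : X -> X) a :
  (forall xi, exists x, pi x = xi) ->
  (forall x y, pi (g x) = pi x + (pi (g y) - pi y)) ->
  ev0 (pi_star pi g) = a -> forall x, pi (g x) = pi x + a.
Proof.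
move=> pi_onto g_shift <- x; have [x0 pix0] := pi_onto 0.
have pi_starE : forall y, pi_star pi g (pi y) = pi (g y).
  apply: (epsilon_spec (inhabits id) (fun h => forall y, h (pi y) = pi (g y))).
  by exists (fun xi => xi + (pi (g x0) - pi x0)) => z; rewrite -g_shift.
by rewrite /ev0 -pix0 pi_starE (g_shift x x0) pix0 subr0.
Qed.

Lemma supp_conj (X : Type) (Xm : zmodType) (E : set (X -> X)) (e g h f : X -> X)
  (pi : X -> Xm) a :
  e \o e = e -> structure_group E e g -> structure_group E e h ->
  structure_group E e f -> h \o g = e -> g \o h = e ->
  (forall x, pi (e x) = pi x) -> (forall x, pi (g x) = pi x + a) ->
  supp e pi (g \o f \o h) = [set xi + a | xi in supp e pi f].
Proof.
move=> ee' Hg Hh Hf hg' gh' pie pig.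
have ee x : e (e x) = e x := congr1 (@^~ x) ee'.
have hg x : h (g x) = e x := congr1 (@^~ x) hg'.
have gh x : g (h x) = e x := congr1 (@^~ x) gh'.
have [eg _] := structure_group_neutral ee Hg.
have [eh he] := structure_group_neutral ee Hh.
have [ef _] := structure_group_neutral ee Hf.
have pih x : pi (h x) = pi x - a by rewrite -[in RHS]pie -gh pig addrK.
rewrite predeqE => xi; split.
  move=> [x [<- gfhx]]; exists (pi (h x)); last by rewrite pih subrK.
  exists (h x); split => //; rewrite eh => fhx; apply: gfhx => /=.
  by rewrite he fhx gh.
move=> [_ [y [<- fy]] <-]; exists (g y); split; first by rewrite pig.
rewrite /= eg hg => gfy; apply: fy.
by move/(congr1 h): gfy; rewrite !hg ef.
Qed.

Unset Implicit Arguments. Set Strict Implicit. Set Printing Implicit Defensive.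

Theorem mainTheorem5 (R : realType) (X : pseudoMetricType R) (T : zmodType)
  (alpha : T -> X -> X) (Xm : topologicalZmodType) (c : T -> Xm) (pi : X -> Xm)
  (e : X -> X) (s : Xm -> X -> X) (f : X -> X) (a : Xm) :
  hausdorff_space X -> compact [set: X] ->
  is_action alpha -> minimal_system alpha ->
  is_max_equicontinuous_factor alpha c pi ->
  minimal_idempotent (ellis alpha) e ->
  (forall xi, structure_group (ellis alpha) e (s xi)) ->
  (forall xi, ev0 (pi_star pi (s xi)) = xi) ->
  (forall t xi, s (xi + c t) = alpha t \o s xi) ->
  K_e (ellis alpha) e pi f -> f <> e ->
  supp e pi (s a \o f \o Hinv (ellis alpha) e (s a)) = [set xi + a | xi in supp e pi f].
Proof.
move=> hX cX act _ [hXm _ _ [cpi pi_onto pi_alpha] _] mie Hs s_ev0 _ [Hf _] _.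
have [[I [[[_ IE _] _] Ie]] ee] := mie.
have Ee : ellis alpha e := IE e Ie.
have [Hh hg gh] := Hinv_inverse (ellis_comp act) (ellis_id act)
  (ellis_minimal_left_ideal act hX cX) mie (Hs a).
have shift := ellis_pi_shift hXm cpi pi_alpha.
have pie x : pi (e x) = pi x.
  have eex : e (e x) = e x := congr1 (@^~ x) ee.
  by rewrite (shift e Ee x (e x)) eex subrr addr0.
have Es : ellis alpha (s a).
  exact: (structure_group_sub (ellis_comp act) Ee) _ (Hs a).
have pis := ev0_pi_star_shift pi_onto (shift _ Es) (s_ev0 a).
exact: supp_conj ee (Hs a) Hh Hf hg gh pie pis.
Qed.
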